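(* Let $(X,\sigma)$ be an infinite mixing subshift of finite type (one-sided or two-sided), and let $x\in X$ be a periodic point with $\sigma^p(x)=x$, $p\in\mathbb N$. Then there is a dense Mycielski set $S\subset X$ with $x\in S$ and $\sigma^p(S)\subset S$ which is syndetically scrambled for $\sigma$.
   Context: A subshift is a nonempty closed $\sigma$-invariant subset $X$ of $\mathcal A^{\mathbb N_0}$ or $\mathcal A^{\mathbb Z}$ ($\mathcal A$ finite), with the shift $\sigma$. It is of finite type if $X$ consists of exactly the sequences containing no word from some fixed finite set of forbidden words. Mixing: for all nonempty open $U,V$, $\{n:\sigma^n(U)\cap V\neq\emptyset\}$ is cofinite. Syndetic: a subset of $\mathbb N$ meeting every set containing arbitrarily long runs of consecutive integers. $\mathrm{Asy}(\sigma)=\{(x,y):\lim_n d(\sigma^n x,\sigma^n y)=0\}$; $\mathrm{SProx}(\sigma)=\{(x,y):\{n:d(\sigma^nx,\sigma^ny)<\varepsilon\}$ syndetic for all $\varepsilon>0\}$. A set with at least two points is syndetically scrambled if all its pairs of distinct points lie in $\mathrm{SProx}\setminus\mathrm{Asy}$. Cantor set: nonempty compact perfect totally disconnected; Mycielski set: countable union of Cantor sets. *)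

(* Symbolic dynamics on A^I with I = nat (one-sided) or I = Z (two-sided). *)
From Stdlib Require Import Arith ZArith List.
Import ListNotations.
Set Implicit Arguments.

Section Generic.
(* Index type, the successor on indices (shift direction), and an increasing
   exhausting family of finite windows of indices.  For the product topology on
   A^I, the basic neighbourhoods of x are the sets {y | y agrees with x on win k}. *)
Variables (I : Type) (sh : I -> I) (win : nat -> I -> Prop) (A : Type).

Definition pt := I -> A.
Definition pset := pt -> Prop.

Definition shift (x : pt) : pt := fun i => x (sh i).
Definition shiftn (n : nat) (x : pt) : pt := Nat.iter n shift x.

Definition agree (k : nat) (x y : pt) : Prop := forall i, win k i -> x i = y i.

Definition is_open (U : pset) : Prop :=
  forall x, U x -> exists k, forall y, agree k x y -> U y.
Definition is_closed (K : pset) : Prop := is_open (fun y => ~ K y).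

Definition occurs (w : list A) (x : pt) (i : I) : Prop :=
  forall j a, nth_error w j = Some a -> x (Nat.iter j sh i) = a.

Definition is_subshift (X : pset) : Prop :=
  (exists x, X x) /\ is_closed X /\ (forall x, X x -> X (shift x)).

Definition is_SFT (X : pset) : Prop :=
  exists F : list (list A),
    forall x, X x <-> (forall w, In w F -> forall i, ~ occurs w x i).

Definition infinite_set (X : pset) : Prop :=
  forall l : list pt, exists x, X x /\ ~ In x l.

Definition mixing (X : pset) : Prop :=
  forall U V : pset, is_open U -> is_open V ->
    (exists u, X u /\ U u) -> (exists v, X v /\ V v) ->
    exists N, forall n, N <= n -> exists y, X y /\ U y /\ X (shiftn n y) /\ V (shiftn n y).

Definition dense_in (X S : pset) : Prop :=
  forall U, is_open U -> (exists u, X u /\ U u) -> exists s, S s /\ U s.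

Definition compact (K : pset) : Prop :=
  forall (J : Type) (U : J -> pset),
    (forall j, is_open (U j)) -> (forall y, K y -> exists j, U j y) ->
    exists l : list J, forall y, K y -> exists j, In j l /\ U j y.

Definition perfect (K : pset) : Prop :=
  forall x, K x -> forall U, is_open U -> U x -> exists y, K y /\ U y /\ y <> x.

Definition totally_disconnected (K : pset) : Prop :=
  forall C : pset, (forall y, C y -> K y) ->
  forall a b, C a -> C b -> a <> b ->
  exists U V, is_open U /\ is_open V /\ (forall y, C y -> U y \/ V y) /\
    (exists y, C y /\ U y) /\ (exists y, C y /\ V y) /\
    (forall y, C y -> U y -> V y -> False).

Definition cantor (K : pset) : Prop :=
  (exists y, K y) /\ compact K /\ perfect K /\ totally_disconnected K.

Definition mycielski (S : pset) : Prop :=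
  exists C : nat -> pset, (forall n, cantor (C n)) /\
    (forall y, S y <-> exists n, C n y).

End Generic.

Definition thick (T : nat -> Prop) : Prop :=
  forall L, exists m, forall j, j < L -> T (m + j).
Definition syndetic (Sy : nat -> Prop) : Prop :=
  forall T, thick T -> exists n, Sy n /\ T n.

Section Generic2.
Variables (I : Type) (sh : I -> I) (win : nat -> I -> Prop) (A : Type).

(* d(x,y) < 2^-k  is read as  "x and y agree on the window k" *)
Definition asymptotic (x y : pt I A) : Prop :=
  forall k, exists N, forall n, N <= n ->
    agree win k (shiftn sh n x) (shiftn sh n y).

Definition synd_proximal (x y : pt I A) : Prop :=
  forall k, syndetic (fun n => agree win k (shiftn sh n x) (shiftn sh n y)).

Definition synd_scrambled (S : pset I A) : Prop :=
  (exists a b, S a /\ S b /\ a <> b) /\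
  (forall a b, S a -> S b -> a <> b ->
     synd_proximal a b /\ ~ asymptotic a b).

End Generic2.

Definition thm4p7_for (I : Type) (sh : I -> I) (win : nat -> I -> Prop) : Prop :=
  forall (A' : Type), (exists l : list A', forall a, In a l) ->
  forall X : pset I A',
    is_subshift sh win X -> is_SFT sh X ->
    infinite_set X -> mixing sh win X ->
  forall (x : pt I A') (p : nat), X x -> 0 < p -> shiftn sh p x = x ->
  exists S : pset I A',
    (forall y, S y -> X y) /\ dense_in win X S /\ mycielski win S /\
    S x /\ (forall y, S y -> S (shiftn sh p y)) /\
    synd_scrambled sh win S.

Definition win1 (k i : nat) : Prop := i < k.
Definition win2 (k : nat) (i : Z) : Prop := (- Z.of_nat k < i < Z.of_nat k)%Z.

(* Both cases are treated at once: the index set embeds into Z via pos (the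
   shift adds 1, windows are symmetric intervals), and points are read off
   configurations Z -> A. If M exceeds the length of every forbidden word, a
   configuration all of whose length-M windows occur in X defines a point of
   X; this makes gluing easy. Let xf be the periodic extension of x to Z.
   - Mixing along multiples of p yields bridges, hence a marker B (an
     admissible perturbation of xf on a bounded interval, first deviating
     from xf at q) and, for every window of every point of X, an admissible
     prefix which afterwards equals xf (Sections SFT, Periodic, Prefixes).
   - A coding block is a pair of markers whose distance encodes one bit;
     blocks sit at tn n = G n^2 p, with growing gaps (Section Blocks).
   - A code (jj, qq, al) gives the point Psi jj qq al: prefix number qq, then
     the blocks of class qq carrying the bits al, all translated by jj
     periods (Section Construction). For fixed jj, qq this is a continuous
     injection of 2^N, so its image is a Cantor set (Section CantorImage).
   - S is the union of these images. Away from the sparse blocks all its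
     points coincide with x, which gives syndetic proximality; distinct points
     differ at infinitely many blocks, so they are not asymptotic; the
     prefixes make S dense, the trivial code gives x, and sigma^p increments
     jj. *)
From Pilot Require Import Defs.
From Stdlib Require Import Arith ZArith List Lia Classical ClassicalEpsilon FunctionalExtensionality Cantor.
Import ListNotations.

(* Every digit sequence g with values below b is, on its first K digits, the
   base-b expansion of some number; this enumerates the patterns of a window. *)
Lemma digits_exist : forall b (g : nat -> nat), (0 < b)%nat -> (forall e, (g e < b)%nat) ->
  forall K, exists c, (c < b ^ K)%nat /\ forall e, (e < K)%nat -> ((c / b ^ e) mod b)%nat = g e.
Proof.
  intros b g Hb Hg K. induction K as [|K IH].
  - exists 0%nat. simpl. split; [lia | intros; lia].
  - destruct IH as (c & Hc & Hce). exists (c + g K * b ^ K)%nat. split.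
    + rewrite Nat.pow_succ_r by lia. specialize (Hg K). nia.
    + intros e He. assert (Hbe : b ^ e <> 0%nat) by (apply Nat.pow_nonzero; lia).
      destruct (Nat.eq_dec e K) as [->|Hne].
      * rewrite Nat.div_add, Nat.div_small by auto. apply Nat.mod_small. auto.
      * replace (b ^ K)%nat with (b ^ (K - e - 1) * b * b ^ e)%nat.
        2:{ rewrite <- (Nat.pow_1_r b) at 2. rewrite <- !Nat.pow_add_r. f_equal. lia. }
        rewrite Nat.mul_assoc, Nat.div_add, Nat.mul_assoc, Nat.Div0.mod_add by auto.
        apply Hce. lia.
Qed.

(* Cantor-pairing bookkeeping for the blocks: block n belongs to the class
   cls n and reads bit number gi n; blk qq i m is a block of class qq reading
   bit i, with index at least m. *)
Definition cls (n : nat) : nat := fst (Cantor.of_nat n).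
Definition gi (n : nat) : nat := fst (Cantor.of_nat (snd (Cantor.of_nat n))).
Definition blk (qq i m : nat) : nat := Cantor.to_nat (qq, Cantor.to_nat (i, m)).

Lemma of_nat_le : forall n, (fst (Cantor.of_nat n) <= n /\ snd (Cantor.of_nat n) <= n)%nat.
Proof.
  intros n. pose proof (Cantor.cancel_to_of n). destruct (Cantor.of_nat n) as [a b].
  pose proof (Cantor.to_nat_non_decreasing a b). simpl. lia.
Qed.

Lemma gi_le : forall n, (gi n <= n)%nat.
Proof. intros. unfold gi. pose proof (of_nat_le n). pose proof (of_nat_le (snd (Cantor.of_nat n))). lia. Qed.

Lemma cls_blk : forall qq i m, cls (blk qq i m) = qq.
Proof. intros. unfold cls, blk. rewrite Cantor.cancel_of_to. reflexivity. Qed.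

Lemma gi_blk : forall qq i m, gi (blk qq i m) = i.
Proof. intros. unfold gi, blk. rewrite Cantor.cancel_of_to. cbn [fst snd]. rewrite Cantor.cancel_of_to. reflexivity. Qed.

Lemma blk_ge : forall qq i m, (m <= blk qq i m)%nat.
Proof.
  intros. unfold blk. pose proof (Cantor.to_nat_non_decreasing qq (Cantor.to_nat (i, m))).
  pose proof (Cantor.to_nat_non_decreasing i m). lia.
Qed.

Lemma existsb_upto : forall (al : nat -> bool) i,
  existsb al (seq 0 (S i)) = true <-> exists i', (i' <= i)%nat /\ al i' = true.
Proof.
  intros. rewrite existsb_exists. split; intros (i' & H1 & H2); exists i'; split; auto.
  - apply in_seq in H1. lia.
  - apply in_seq. lia.
Qed.

Section Positions.
(* The index set I is identified, through pos, with a set of integers closed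
   under +1 and containing all nonnegative integers: pos is injective (with
   inverse ofZ), the shift adds 1, and windows are symmetric intervals. *)
Variables (I : Type) (sh : I -> I) (win : nat -> I -> Prop) (pos : I -> Z) (ofZ : Z -> I).
Hypothesis pos_sh : forall i, pos (sh i) = (pos i + 1)%Z.
Hypothesis ofZ_pos : forall i, ofZ (pos i) = i.
Hypothesis pos_ofZ : forall z, (0 <= z)%Z -> pos (ofZ z) = z.
Hypothesis win_pos : forall k i, win k i <-> (- Z.of_nat k < pos i < Z.of_nat k)%Z.

Lemma pos_iter : forall n i, pos (Nat.iter n sh i) = (pos i + Z.of_nat n)%Z.
Proof. induction n; intros; simpl; [lia | rewrite pos_sh, IHn; lia]. Qed.

Lemma iter_ofZ : forall n i, Nat.iter n sh i = ofZ (pos i + Z.of_nat n).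
Proof. intros. rewrite <- pos_iter, ofZ_pos. reflexivity. Qed.

Lemma shiftn_ofZ : forall (A : Type) n (y : pt I A) i,
  shiftn sh n y i = y (ofZ (pos i + Z.of_nat n)).
Proof.
  intros A n. induction n as [|n IH]; intros y i.
  - simpl. rewrite Z.add_0_r, ofZ_pos. reflexivity.
  - change (shiftn sh (S n) y i) with (Defs.shift sh (shiftn sh n y) i). unfold Defs.shift.
    rewrite IH, pos_sh. f_equal. f_equal. lia.
Qed.

Lemma shiftn_iter : forall (A : Type) n (y : pt I A) i, shiftn sh n y i = y (Nat.iter n sh i).
Proof. intros. rewrite shiftn_ofZ, iter_ofZ. reflexivity. Qed.

(* Any two distinct points are separated by the clopen set fixing one
   coordinate, so every subset of A^I is totally disconnected. *)
Lemma all_totally_disconnected : forall (A : Type) (K : pset I A), totally_disconnected win K.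
Proof.
  intros A K C _ a b Ca Cb Hab.
  assert (exists i, a i <> b i) as [i Hi].
  { apply NNPP. intro Hn. apply Hab. apply functional_extensionality. intros i.
    apply NNPP. intro. apply Hn. eauto. }
  set (k := S (Z.to_nat (Z.abs (pos i)))).
  assert (Hk : win k i) by (apply win_pos; unfold k; lia).
  exists (fun y => y i = a i), (fun y => y i <> a i).
  repeat split.
  - intros y Hy. exists k. intros y' Hyy'. rewrite <- Hyy'; auto.
  - intros y Hy. exists k. intros y' Hyy'. rewrite <- Hyy'; auto.
  - intros y _. apply classic.
  - exists a. auto.
  - exists b. auto.
  - intros y _ H1 H2. auto.
Qed.

Section CantorImage.
Variables (A : Type) (phi : (nat -> bool) -> pt I A).

Definition prefix_eq (n : nat) (al be : nat -> bool) : Prop := forall i, (i < n)%nat -> al i = be i.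

Hypothesis phi_cont : forall k, exists m, forall al al', prefix_eq m al al' -> agree win k (phi al) (phi al').
Hypothesis phi_inj : forall al al', phi al = phi al' -> forall i, al i = al' i.

Definition upd (be : nat -> bool) (n : nat) (b : bool) : nat -> bool :=
  fun i => if Nat.eqb i n then b else be i.

Lemma prefix_upd : forall be n b, prefix_eq n (upd be n b) be.
Proof. intros be n b i Hi. unfold upd. destruct (Nat.eqb_spec i n); [lia | reflexivity]. Qed.

Section Koenig.
Variable bad : (nat -> bool) -> nat -> Prop.
Hypothesis bad_prefix : forall be be' n, prefix_eq n be be' -> bad be n -> bad be' n.
Hypothesis bad_step : forall be n, bad be n -> bad (upd be n false) (S n) \/ bad (upd be n true) (S n).

Fixpoint branch (be0 : nat -> bool) (n : nat) : nat -> bool :=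
  match n with
  | O => be0
  | S n' => let be := branch be0 n' in
      upd be n' (if excluded_middle_informative (bad (upd be n' false) (S n')) then false else true)
  end.

Lemma branch_stable : forall be0 n i, (i < n)%nat -> branch be0 n i = branch be0 (S i) i.
Proof.
  intros be0 n i. induction n as [|n IH]; intros Hi; [lia|].
  destruct (Nat.eq_dec i n) as [->|Hne]; [reflexivity|].
  simpl branch at 1. rewrite prefix_upd by lia. apply IH. lia.
Qed.

Lemma koenig : forall be0, bad be0 0 -> exists ast, forall n, bad ast n.
Proof.
  intros be0 H0.
  assert (Inv : forall n, bad (branch be0 n) n).
  { induction n as [|n IH]; [exact H0|]. simpl.
    destruct (excluded_middle_informative (bad (upd (branch be0 n) n false) (S n))) as [Hf|Hf];
      [exact Hf|]. destruct (bad_step _ _ IH); [contradiction | assumption]. }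
  exists (fun i => branch be0 (S i) i). intros n.
  apply (bad_prefix (branch be0 n)); [|apply Inv].
  intros i Hi. apply branch_stable. exact Hi.
Qed.
End Koenig.

Lemma image_compact : compact win (fun y => exists al, y = phi al).
Proof.
  intros J U HU Hcov. apply NNPP. intro Hno.
  set (uncovered := fun (be : nat -> bool) (n : nat) => ~ exists l : list J,
    forall al, prefix_eq n al be -> exists j, In j l /\ U j (phi al)).
  destruct (koenig uncovered) with (be0 := fun _ : nat => false) as [ast Hast].
  - intros be be' n Hbb' Hbe (l & Hl). apply Hbe. exists l. intros al Hal.
    apply Hl. intros i Hi. rewrite Hal by exact Hi. apply Hbb'. exact Hi.
  - intros be n Hbe. apply NNPP. intro Hn. apply Hbe.
    destruct (NNPP _ (fun H => Hn (or_introl H))) as [l1 H1].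
    destruct (NNPP _ (fun H => Hn (or_intror H))) as [l2 H2].
    exists (l1 ++ l2). intros al Hal.
    assert (Hext : forall b, al n = b -> prefix_eq (S n) al (upd be n b)).
    { intros b Hb i Hi. unfold upd. destruct (Nat.eqb_spec i n) as [->|]; auto. apply Hal. lia. }
    destruct (al n) eqn:En; [destruct (H2 al) as (j & Hj & Uj) | destruct (H1 al) as (j & Hj & Uj)];
      auto; exists j; split; auto; apply in_or_app; auto.
  - intros (l & Hl). apply Hno. exists l. intros y (al & ->). apply Hl. intros i Hi. lia.
  - destruct (Hcov (phi ast)) as [j Hj]; [eauto|].
    destruct (HU j (phi ast) Hj) as [k Hk]. destruct (phi_cont k) as [m Hm].
    apply (Hast m). exists [j]. intros al Hal. exists j. split; [left; reflexivity|].
    apply Hk. apply Hm. intros i Hi. symmetry. apply Hal. exact Hi.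
Qed.

Lemma image_perfect : perfect win (fun y => exists al, y = phi al).
Proof.
  intros y (al & ->) U HU HUy. destruct (HU _ HUy) as [k Hk]. destruct (phi_cont k) as [m Hm].
  exists (phi (upd al m (negb (al m)))). split; [eauto|]. split.
  - apply Hk. apply Hm. intros i Hi. symmetry. apply prefix_upd. exact Hi.
  - intro He. pose proof (phi_inj _ _ He m) as Hm'. unfold upd in Hm'.
    rewrite Nat.eqb_refl in Hm'. destruct (al m); discriminate.
Qed.

Lemma image_cantor : cantor win (fun y => exists al, y = phi al).
Proof.
  split; [exists (phi (fun _ => false)); eauto|].
  split; [apply image_compact|]. split; [apply image_perfect | apply all_totally_disconnected].
Qed.
End CantorImage.

Section SFT.
Variables (A : Type) (X : pset I A) (F : list (list A)).
Hypothesis X_SFT : forall y, X y <-> (forall w, In w F -> forall i, ~ occurs sh w y i).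

Lemma max_length_bound : forall (l : list (list A)) w,
  In w l -> (length w < S (fold_right (fun w m => max (length w) m) 0 l))%nat.
Proof.
  induction l as [|w0 l IH]; simpl; intros w Hw; [contradiction|].
  destruct Hw as [<-|Hw]; [lia|]. specialize (IH w Hw). lia.
Qed.

Definition M : nat := S (fold_right (fun w m => max (length w) m) 0 F).

Definition admissible (f : Z -> A) (c : Z) : Prop :=
  exists u i', X u /\ forall r, (r < M)%nat -> f (c + Z.of_nat r)%Z = u (Nat.iter r sh i').

Definition point_of (f : Z -> A) : pt I A := fun i => f (pos i).
Definition config_of (u : pt I A) : Z -> A := fun z => u (ofZ z).

(* A configuration with admissible windows everywhere yields a point of X:
   each forbidden word would lie inside one window. *)
Lemma point_of_in_X : forall f, (forall i, admissible f (pos i)) -> X (point_of f).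
Proof.
  intros f Hf. apply X_SFT. intros w Hw i Hocc.
  destruct (Hf i) as (u & i' & Xu & Hu).
  apply (proj1 (X_SFT u) Xu w Hw i'). intros j a Hj.
  assert (j < length w)%nat by (apply nth_error_Some; rewrite Hj; discriminate).
  pose proof (max_length_bound F w Hw).
  rewrite <- Hu by (unfold M; lia). rewrite <- (Hocc j a Hj). unfold point_of. rewrite pos_iter. reflexivity.
Qed.

Lemma admissible_config : forall u c, X u -> (0 <= c)%Z -> admissible (config_of u) c.
Proof.
  intros u c Xu Hc. exists u, (ofZ c). split; [exact Xu|]. intros r _.
  unfold config_of. rewrite iter_ofZ, pos_ofZ by exact Hc. reflexivity.
Qed.

Lemma admissible_config_pos : forall u i, X u -> admissible (config_of u) (pos i).
Proof.
  intros u i Xu. exists u, i. split; [exact Xu|]. intros r _.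
  unfold config_of. rewrite iter_ofZ. reflexivity.
Qed.

Lemma admissible_ext : forall f g c, admissible f c ->
  (forall r, (r < M)%nat -> f (c + Z.of_nat r)%Z = g (c + Z.of_nat r)%Z) -> admissible g c.
Proof. intros f g c (u & i' & Xu & Hu) H. exists u, i'. split; auto. intros. rewrite <- H; auto. Qed.

Lemma admissible_translate : forall f g c t, (forall z, g z = f (z + t)%Z) ->
  admissible f (c + t) -> admissible g c.
Proof.
  intros f g c t Hg (u & i' & Xu & Hu). exists u, i'. split; auto.
  intros r Hr. rewrite Hg, <- Hu by exact Hr. f_equal. lia.
Qed.

Definition glue (f g : Z -> A) (a : Z) : Z -> A := fun z => if (z <? a)%Z then f z else g z.

Lemma glue_l : forall f g a z, (z < a)%Z -> glue f g a z = f z.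
Proof. intros. unfold glue. destruct (Z.ltb_spec z a); auto; lia. Qed.
Lemma glue_r : forall f g a z, (a <= z)%Z -> glue f g a z = g z.
Proof. intros. unfold glue. destruct (Z.ltb_spec z a); auto; lia. Qed.

Lemma admissible_glue_l : forall f g a c, (c < a)%Z -> admissible f c ->
  (forall z, (a <= z < a + Z.of_nat M)%Z -> f z = g z) -> admissible (glue f g a) c.
Proof.
  intros f g a c Hc Hf Hfg. apply (admissible_ext f); auto. intros r Hr. unfold glue.
  destruct (Z.ltb_spec (c + Z.of_nat r) a); auto. apply Hfg. lia.
Qed.

Lemma admissible_glue_r : forall f g a c, (a <= c)%Z -> admissible g c -> admissible (glue f g a) c.
Proof. intros. apply (admissible_ext g); auto. intros. rewrite glue_r; auto. lia. Qed.

Lemma admissible_glue : forall f g a c, admissible f c -> admissible g c ->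
  (forall z, (a <= z < a + Z.of_nat M)%Z -> f z = g z) -> admissible (glue f g a) c.
Proof.
  intros f g a c Hf Hg Hfg. destruct (Z.lt_ge_cases c a).
  - apply admissible_glue_l; auto.
  - apply admissible_glue_r; auto.
Qed.

Lemma agree_config : forall K v y, agree win K v y ->
  forall z, (0 <= z < Z.of_nat K)%Z -> config_of y z = config_of v z.
Proof. intros K v y Hvy z Hz. unfold config_of. symmetry. apply Hvy. apply win_pos. rewrite pos_ofZ; lia. Qed.

Lemma agree_shift_config : forall K w y n, agree win K w (shiftn sh n y) ->
  forall r, (0 <= r < Z.of_nat K)%Z -> config_of y (r + Z.of_nat n) = config_of w r.
Proof.
  intros K w y n Hwy r Hr. unfold config_of. rewrite (Hwy (ofZ r)).
  - rewrite shiftn_ofZ, pos_ofZ by lia. reflexivity.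
  - apply win_pos. rewrite pos_ofZ; lia.
Qed.

Lemma agree_open : forall k (a : pt I A), is_open win (fun y => agree win k a y).
Proof. intros k a y Hy. exists k. intros y' Hyy' i Hi. rewrite Hy by auto. apply Hyy'. auto. Qed.

Section Periodic.
Variables (x : pt I A) (p : nat).
Hypothesis Xx : X x.
Hypothesis Hp : (0 < p)%nat.
Hypothesis Hper : shiftn sh p x = x.
Let P := Z.of_nat p.

Lemma P_pos : (0 < P)%Z.
Proof. unfold P. lia. Qed.

Definition xf (z : Z) : A := x (ofZ (z mod P)).

Lemma x_periodic : forall m i, x (Nat.iter (m * p) sh i) = x i.
Proof.
  induction m as [|m IH]; intros i; [reflexivity|].
  simpl Nat.mul. rewrite Nat.iter_add, <- shiftn_iter, Hper. apply IH.
Qed.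

Lemma x_xf : forall i, x i = xf (pos i).
Proof.
  intros i. unfold xf. pose proof (Z_div_mod_eq_full (pos i) P). pose proof (Z.mod_pos_bound (pos i) P P_pos).
  set (q := (pos i / P)%Z) in *. set (r := (pos i mod P)%Z) in *.
  destruct (Z.le_gt_cases 0 q).
  - rewrite <- (x_periodic (Z.to_nat q) (ofZ r)), iter_ofZ, pos_ofZ by lia.
    f_equal. rewrite <- (ofZ_pos i) at 1. f_equal. rewrite Nat2Z.inj_mul, Z2Nat.id by lia. lia.
  - rewrite <- (x_periodic (Z.to_nat (- q)) i), iter_ofZ.
    f_equal. f_equal. rewrite Nat2Z.inj_mul, Z2Nat.id by lia. fold P. lia.
Qed.

Lemma xf_per : forall z m, xf (z + m * P)%Z = xf z.
Proof. intros. unfold xf. rewrite Z_mod_plus_full. reflexivity. Qed.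

Lemma xf_per_sub : forall z m, xf (z - m * P)%Z = xf z.
Proof. intros. rewrite <- (xf_per (z - m * P) m). f_equal. lia. Qed.

Lemma admissible_xf : forall c, admissible xf c.
Proof.
  intros c. exists x, (ofZ (c mod P)). split; [exact Xx|]. intros r _.
  pose proof (Z.mod_pos_bound c P P_pos).
  rewrite x_xf, pos_iter, pos_ofZ by lia. unfold xf.
  rewrite Zplus_mod_idemp_l. reflexivity.
Qed.

Lemma point_of_xf : point_of xf = x.
Proof. apply functional_extensionality. intros i. unfold point_of. rewrite x_xf. reflexivity. Qed.

Lemma config_of_x : forall z, (0 <= z)%Z -> config_of x z = xf z.
Proof. intros. unfold config_of. rewrite x_xf, pos_ofZ; auto. Qed.

Hypothesis X_mixing : mixing sh win X.

Lemma bridge : forall v w, X v -> X w -> forall K N0, exists m, (N0 <= m)%nat /\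
  exists y, X y /\ agree win K v y /\ agree win K w (shiftn sh (m * p) y).
Proof.
  intros v w Xv Xw K N0.
  destruct (X_mixing (fun y => agree win K v y) (fun y => agree win K w y) (agree_open K v) (agree_open K w))
    as [N HN].
  - exists v. split; [exact Xv | intros i _; reflexivity].
  - exists w. split; [exact Xw | intros i _; reflexivity].
  - exists (N + N0)%nat. split; [lia|].
    destruct (HN ((N + N0) * p)%nat) as (y & Xy & U1 & _ & V1); [nia|].
    exists y. auto.
Qed.

Lemma excursion : forall w K, X w -> (M < K)%nat -> exists (B : Z -> A) (m L : nat),
  (forall c, admissible B c) /\ (forall z, (z < Z.of_nat M)%Z -> B z = xf z) /\
  (forall z, (Z.of_nat (L * p) <= z)%Z -> B z = xf z) /\
  (forall i, win K i -> B (Z.of_nat (m * p) + pos i)%Z = w i).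
Proof.
  intros w K Xw HKM.
  destruct (bridge x w Xx Xw K K) as (m1 & Hm1 & y1 & Xy1 & A1 & A1').
  destruct (bridge w x Xw Xx K K) as (m2 & Hm2 & y2 & Xy2 & A2 & A2').
  set (n1 := Z.of_nat (m1 * p)). set (n2 := Z.of_nat (m2 * p)).
  assert (Hn1 : (Z.of_nat K <= n1)%Z) by (unfold n1; nia).
  assert (Hn2 : (Z.of_nat K <= n2)%Z) by (unfold n2; nia).
  set (B1 := glue xf (config_of y1) 0).
  set (B2 := glue B1 (fun z => config_of y2 (z - n1)%Z) n1).
  set (B := glue B2 xf (n1 + n2)).
  assert (Hy1x : forall z, (0 <= z < Z.of_nat K)%Z -> config_of y1 z = xf z).
  { intros. rewrite (agree_config K x y1 A1) by auto. apply config_of_x. lia. }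
  assert (WB1 : forall c, admissible B1 c).
  { intros c. destruct (Z.lt_ge_cases c 0).
    - apply admissible_glue_l; auto using admissible_xf. intros. rewrite Hy1x; auto. lia.
    - apply admissible_glue_r; auto using admissible_config. }
  assert (WB2 : forall c, admissible B2 c).
  { intros c. destruct (Z.lt_ge_cases c n1).
    - apply admissible_glue_l; auto. intros z Hz. unfold B1. rewrite glue_r by lia.
      replace z with ((z - n1) + Z.of_nat (m1 * p))%Z at 1 by (unfold n1; lia).
      rewrite (agree_shift_config K w y1 _ A1'), (agree_config K w y2 A2) by lia. reflexivity.
    - apply admissible_glue_r; auto.
      apply (admissible_translate (config_of y2) _ _ (- n1)); [intros; f_equal; lia|].
      apply admissible_config; auto. lia. }
  exists B, m1, (m1 + m2)%nat. split; [|split; [|split]].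
  - intros c. destruct (Z.lt_ge_cases c (n1 + n2)).
    + apply admissible_glue_l; auto using admissible_xf. intros z Hz. unfold B2. rewrite glue_r by lia.
      replace (z - n1)%Z with ((z - n1 - n2) + Z.of_nat (m2 * p))%Z by (unfold n2; lia).
      rewrite (agree_shift_config K x y2 _ A2'), config_of_x by lia.
      rewrite <- (xf_per (z - n1 - n2) (Z.of_nat (m1 + m2))). f_equal. unfold n1, n2, P. lia.
    + apply admissible_glue_r; auto using admissible_xf.
  - intros z Hz. unfold B, B2, B1. rewrite !glue_l by lia.
    destruct (Z.lt_ge_cases z 0); [rewrite glue_l; auto|]. rewrite glue_r by lia. apply Hy1x. lia.
  - intros z Hz. unfold B. rewrite glue_r; [reflexivity|]. unfold n1, n2. lia.
  - intros i Hi. pose proof Hi as Hi'. apply win_pos in Hi'. fold n1. unfold B, B2.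
    rewrite glue_l by lia. destruct (Z.lt_ge_cases (pos i) 0).
    + rewrite glue_l by lia. unfold B1. rewrite glue_r by lia.
      rewrite (A1' i Hi), shiftn_ofZ. unfold config_of. f_equal. f_equal. unfold n1. lia.
    + rewrite glue_r by lia. unfold config_of. rewrite (A2 i Hi).
      f_equal. rewrite <- (ofZ_pos i) at 2. f_equal. lia.
Qed.

Lemma first_deviation : forall (B : Z -> A) z0, (forall z, (z < 0)%Z -> B z = xf z) ->
  B z0 <> xf z0 -> exists q, (q <= z0)%Z /\ B q <> xf q /\ forall z, (z < q)%Z -> B z = xf z.
Proof.
  intros B z0 Hneg Hz0.
  assert (Hnn : (0 <= z0)%Z) by (destruct (Z.lt_ge_cases z0 0); [exfalso; auto | auto]).
  assert (Least : forall n : nat, (Z.of_nat n <= z0)%Z -> B (Z.of_nat n) <> xf (Z.of_nat n) ->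
    exists q, (q <= z0)%Z /\ B q <> xf q /\ forall z, (z < q)%Z -> B z = xf z).
  { intros n. induction n as [n IH] using (well_founded_induction lt_wf). intros Hn Bn.
    destruct (classic (exists z, (0 <= z < Z.of_nat n)%Z /\ B z <> xf z)) as [(z & Hz & Bz)|Hno].
    - apply (IH (Z.to_nat z)); rewrite ?Z2Nat.id; auto; lia.
    - exists (Z.of_nat n). split; [exact Hn|]. split; [exact Bn|].
      intros z Hz. destruct (Z.lt_ge_cases z 0); [auto|].
      apply NNPP. intro Bz. apply Hno. exists z. auto. }
  apply (Least (Z.to_nat z0)); rewrite Z2Nat.id; auto. lia.
Qed.

Hypothesis X_infinite : infinite_set X.

Lemma marker_exists : exists (B : Z -> A) (L : nat) (q : Z),
  (forall c, admissible B c) /\ (forall z, (Z.of_nat (L * p) <= z)%Z -> B z = xf z) /\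
  (Z.of_nat M <= q < Z.of_nat (L * p))%Z /\ B q <> xf q /\ (forall z, (z < q)%Z -> B z = xf z).
Proof.
  destruct (X_infinite [x]) as (w & Xw & Hw).
  assert (exists i0, w i0 <> x i0) as [i0 Hi0].
  { apply NNPP. intro Hn. apply Hw. left. apply functional_extensionality. intro i.
    apply NNPP. intro H. apply Hn. exists i. auto. }
  set (K := (M + Z.to_nat (Z.abs (pos i0)) + 1)%nat).
  destruct (excursion w K Xw) as (B & m & L & BW & Blo & Bhi & Bw); [unfold K; lia|].
  assert (Hdev : B (Z.of_nat (m * p) + pos i0)%Z <> xf (Z.of_nat (m * p) + pos i0)%Z).
  { rewrite Bw by (apply win_pos; unfold K; lia).
    rewrite x_xf, <- (xf_per (pos i0) (Z.of_nat m)) in Hi0. intro He. apply Hi0.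
    rewrite He. f_equal. unfold P. lia. }
  destruct (first_deviation B _ (fun z Hz => Blo z ltac:(lia)) Hdev) as (q & Hqz & Bq & Bbq).
  exists B, L, q. split; [exact BW|]. split; [exact Bhi|]. split; [|split; assumption].
  split.
  - destruct (Z.lt_ge_cases q (Z.of_nat M)) as [Hq|Hq]; [exfalso; apply Bq; apply Blo; exact Hq | exact Hq].
  - destruct (Z.lt_ge_cases q (Z.of_nat (L * p))) as [Hq|Hq]; [exact Hq | exfalso; apply Bq; apply Bhi; exact Hq].
Qed.

Lemma prefix_exists : forall v (k : nat), X v -> exists (Pr : Z -> A) (c : Z),
  (forall i, admissible Pr (pos i)) /\ (forall z, (c <= z)%Z -> Pr z = xf z) /\ (Z.of_nat k <= c)%Z /\
  (forall i, win k i -> Pr (pos i) = v i).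
Proof.
  intros v k Xv. set (K := (k + M)%nat).
  destruct (bridge v x Xv Xx K K) as (m & Hm & y & Xy & A1 & A2).
  set (n := Z.of_nat (m * p)).
  assert (Hn : (Z.of_nat K <= n)%Z) by (unfold n; nia).
  set (P1 := glue (config_of v) (config_of y) 0).
  exists (glue P1 xf n), n. split; [|split; [|split]].
  - intros i. destruct (Z.lt_ge_cases (pos i) n).
    + apply admissible_glue_l; auto.
      * destruct (Z.lt_ge_cases (pos i) 0).
        -- apply admissible_glue_l; auto using admissible_config_pos.
           intros z Hz. symmetry. apply (agree_config K); auto. unfold K; lia.
        -- apply admissible_glue_r; auto using admissible_config_pos.
      * intros z Hz. unfold P1. rewrite glue_r by lia.
        replace z with ((z - n) + Z.of_nat (m * p))%Z at 1 by (unfold n; lia).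
        rewrite (agree_shift_config K x y _ A2), config_of_x by (unfold K in *; lia).
        rewrite <- (xf_per (z - n) (Z.of_nat m)). f_equal. unfold n, P. lia.
    + apply admissible_glue_r; auto using admissible_xf.
  - intros. apply glue_r. auto.
  - unfold K in Hn. lia.
  - intros i Hi. pose proof Hi as Hi'. apply win_pos in Hi'. rewrite glue_l by (unfold K in Hn; lia).
    unfold P1, glue. destruct (pos i <? 0)%Z; unfold config_of; rewrite ofZ_pos; auto.
    symmetry. apply A1. apply win_pos. unfold K. lia.
Qed.

Section Blocks.
Variables (B : Z -> A) (L : nat) (q : Z).
Hypothesis B_adm : forall c, admissible B c.
Hypothesis B_hi : forall z, (Z.of_nat (L * p) <= z)%Z -> B z = xf z.
Hypothesis q_range : (Z.of_nat M <= q < Z.of_nat (L * p))%Z.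
Hypothesis B_q : B q <> xf q.
Hypothesis B_lo : forall z, (z < q)%Z -> B z = xf z.

(* A coding block starting at t carries a marker at t and a second one at
   t + off2 + bit_shift b: the bit b is read off the position of the second
   marker. The whole block lies in [t, t + blk_len). *)
Definition mk_len : Z := Z.of_nat (L * p).
Definition off2 : Z := (mk_len + P)%Z.
Definition blk_len : Z := (off2 + P + mk_len)%Z.
Definition bit_shift (b : bool) : Z := ((if b then 1 else 0) * P)%Z.

Definition D (t : Z) (b : bool) : Z -> A :=
  glue (fun z => B (z - t)%Z) (fun z => B (z - t - off2 - bit_shift b)%Z) (t + off2).

Lemma mk_len_eq : mk_len = (Z.of_nat L * P)%Z.
Proof. unfold mk_len, P. lia. Qed.

Lemma blk_len_pos : (0 <= mk_len < off2 /\ 0 < off2 + P + q < blk_len)%Z.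
Proof. pose proof P_pos. unfold blk_len, off2, mk_len in *. lia. Qed.

Lemma B_translate_hi : forall z k, (mk_len <= z - k * P)%Z -> B (z - k * P)%Z = xf z.
Proof. intros z k Hz. rewrite B_hi, xf_per_sub by (unfold mk_len in Hz; lia). reflexivity. Qed.

Lemma B_translate_lo : forall z k, (z - k * P < q)%Z -> B (z - k * P)%Z = xf z.
Proof. intros z k Hz. rewrite B_lo, xf_per_sub by lia. reflexivity. Qed.

Section Block.
(* Blocks start at multiples of P, so that they are compatible with xf. *)
Variables (tm : Z) (b : bool).
Let t := (tm * P)%Z.

Lemma second_marker : forall z,
  (z - t - off2 - bit_shift b = z - (tm + Z.of_nat L + 1 + (if b then 1 else 0)) * P)%Z.
Proof. intros. unfold t, off2, bit_shift. rewrite mk_len_eq. lia. Qed.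

Lemma D_adm : forall c, admissible (D t b) c.
Proof.
  pose proof P_pos. intros c. unfold D. destruct (Z.lt_ge_cases c (t + off2)).
  - apply admissible_glue_l; auto.
    + apply (admissible_translate B _ _ (- t)); [intros; f_equal; lia | apply B_adm].
    + intros z Hz. rewrite second_marker, B_translate_lo
        by (rewrite <- second_marker; unfold bit_shift; destruct b; lia).
      apply B_translate_hi. unfold off2, t in *. lia.
  - apply admissible_glue_r; auto.
    apply (admissible_translate B _ _ (- (t + off2 + bit_shift b))); [intros; f_equal; lia | apply B_adm].
Qed.

Lemma D_before_q : forall z, (z < t + q)%Z -> D t b z = xf z.
Proof.
  intros z Hz. pose proof blk_len_pos. unfold D. rewrite glue_l by (unfold mk_len in *; lia).
  apply B_translate_lo. unfold t in *. lia.
Qed.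

Lemma D_at_q : D t b (t + q)%Z <> xf (t + q)%Z.
Proof.
  pose proof blk_len_pos. unfold D. rewrite glue_l by (unfold mk_len in *; lia).
  replace (t + q - t)%Z with q by lia. unfold t. rewrite Z.add_comm, xf_per. exact B_q.
Qed.

Lemma D_between : forall z, (t + mk_len <= z < t + off2 + bit_shift b + q)%Z -> D t b z = xf z.
Proof.
  intros z Hz. unfold D. destruct (Z.lt_ge_cases z (t + off2)).
  - rewrite glue_l by lia. apply B_translate_hi. unfold t in *. lia.
  - rewrite glue_r by lia. rewrite second_marker. apply B_translate_lo.
    unfold t, off2, bit_shift in *. rewrite mk_len_eq in *. destruct b; lia.
Qed.

Lemma D_at_second_q : D t b (t + off2 + bit_shift b + q)%Z <> xf (t + off2 + bit_shift b + q)%Z.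
Proof.
  pose proof P_pos. unfold D. rewrite glue_r by (unfold bit_shift; destruct b; lia).
  replace (t + off2 + bit_shift b + q - t - off2 - bit_shift b)%Z with q by lia.
  rewrite <- (xf_per q (tm + Z.of_nat L + 1 + (if b then 1 else 0))) in B_q.
  intro He. apply B_q. rewrite He. f_equal. unfold t, off2, bit_shift. rewrite mk_len_eq. lia.
Qed.

Lemma D_outside : forall z, (z < t \/ t + blk_len <= z)%Z -> D t b z = xf z.
Proof.
  intros z [Hz|Hz]; [apply D_before_q; lia|].
  pose proof P_pos. pose proof blk_len_pos. unfold D. rewrite glue_r by lia.
  rewrite second_marker. apply B_translate_hi.
  unfold t, blk_len, off2 in *. rewrite mk_len_eq in *. destruct b; lia.
Qed.
End Block.

(* Blocks are placed at tn n = G n^2 P: the gaps between consecutive block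
   positions exceed G (2n+1), hence grow, and every block fits in its gap. *)
Definition G : nat := (Z.to_nat blk_len + M + 1)%nat.
Definition tn (n : nat) : Z := (Z.of_nat G * Z.of_nat n * Z.of_nat n * P)%Z.

Lemma G_ge : (blk_len + Z.of_nat M + 1 <= Z.of_nat G)%Z.
Proof. pose proof blk_len_pos. pose proof P_pos. unfold G. lia. Qed.

Lemma G_mul : forall a, (0 <= a)%Z -> (a <= Z.of_nat G * a)%Z.
Proof. intros. pose proof G_ge. pose proof blk_len_pos. pose proof P_pos. nia. Qed.

Lemma tn_ge : forall n, (Z.of_nat n <= tn n)%Z.
Proof.
  intros n. pose proof G_ge. pose proof blk_len_pos. pose proof P_pos. unfold tn.
  assert (Z.of_nat n <= Z.of_nat n * Z.of_nat n)%Z by nia.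
  assert (1 <= Z.of_nat G * P)%Z by nia. nia.
Qed.

Lemma tn_S : forall n, (tn n + Z.of_nat G * (2 * Z.of_nat n + 1) <= tn (S n))%Z.
Proof. intros. pose proof G_ge. pose proof P_pos. unfold tn. rewrite Nat2Z.inj_succ. nia. Qed.

Lemma tn_lt : forall n m, (n < m)%nat -> (tn n + Z.of_nat G * (2 * Z.of_nat n + 1) <= tn m)%Z.
Proof.
  intros n m Hnm. induction Hnm as [|m Hnm IH]; [apply tn_S|].
  pose proof (tn_S m). pose proof G_ge. pose proof blk_len_pos. pose proof P_pos. nia.
Qed.

Lemma tn_sep : forall n m, (n < m)%nat -> (tn n + blk_len + Z.of_nat M + 1 <= tn m)%Z.
Proof. intros. pose proof (tn_lt n m H). pose proof G_ge. pose proof blk_len_pos. nia. Qed.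

Lemma tn_le : forall n m, (n <= m)%nat -> (tn n <= tn m)%Z.
Proof.
  intros n m Hnm. destruct (Nat.eq_dec n m) as [->|]; [lia|].
  pose proof (tn_sep n m). pose proof blk_len_pos. lia.
Qed.

Fixpoint search (z : Z) (fuel m : nat) : nat :=
  match fuel with O => m | S f => if (z <? tn m + blk_len)%Z then m else search z f (S m) end.

Definition nidx (z : Z) : nat := search z (S (Z.to_nat z)) 0.

Lemma search_spec : forall z fuel m, (forall m', (m' < m)%nat -> (tn m' + blk_len <= z)%Z) ->
  (Z.to_nat z < m + fuel)%nat ->
  (z < tn (search z fuel m) + blk_len)%Z /\ (forall m', (m' < search z fuel m)%nat -> (tn m' + blk_len <= z)%Z).
Proof.
  intros z fuel. induction fuel as [|fuel IH]; intros m Hm Hf; simpl.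
  - split; auto. pose proof (tn_ge m). pose proof blk_len_pos. lia.
  - destruct (Z.ltb_spec z (tn m + blk_len)); [split; auto|].
    apply IH; [|lia]. intros m' Hm'. destruct (Nat.eq_dec m' m) as [->|]; auto. apply Hm. lia.
Qed.

Lemma nidx_spec : forall z, (z < tn (nidx z) + blk_len)%Z /\
  (forall m', (m' < nidx z)%nat -> (tn m' + blk_len <= z)%Z).
Proof. intros. apply search_spec; intros; lia. Qed.

Lemma nidx_le : forall z, (Z.of_nat (nidx z) <= Z.max 0 z)%Z.
Proof.
  intros z. destruct (nidx_spec z) as [S1 S2]. destruct (nidx z) as [|n]; [lia|].
  specialize (S2 n ltac:(lia)). pose proof (tn_ge n). pose proof blk_len_pos. lia.
Qed.

Section Body.
Variables (act bit : nat -> bool).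

Definition Gn (n : nat) : Z -> A := fun z => if act n then D (tn n) (bit n) z else xf z.
Definition Body : Z -> A := fun z => Gn (nidx z) z.

Lemma Gn_outside : forall n z, (z < tn n \/ tn n + blk_len <= z)%Z -> Gn n z = xf z.
Proof. intros. unfold Gn. destruct (act n); auto. apply D_outside. auto. Qed.

Lemma Gn_adm : forall n c, admissible (Gn n) c.
Proof. intros. unfold Gn. destruct (act n); [apply D_adm | apply admissible_xf]. Qed.

Lemma Body_adm : forall c, admissible Body c.
Proof.
  intros c. apply (admissible_ext (Gn (nidx c))); [apply Gn_adm|].
  intros r Hr. unfold Body. set (n := nidx c). destruct (nidx_spec c) as [S1 S2].
  destruct (nidx_spec (c + Z.of_nat r)) as [T1 T2].
  destruct (lt_eq_lt_dec (nidx (c + Z.of_nat r)) n) as [[Hl|Hl]|Hl].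
  - specialize (S2 _ Hl). lia.
  - rewrite Hl. reflexivity.
  - specialize (T2 _ Hl). rewrite !Gn_outside; [reflexivity | | lia].
    left. pose proof (tn_sep n _ Hl). unfold n in *. lia.
Qed.

Lemma Body_local : forall (n : nat) z, (n = 0%nat \/ (tn (n - 1) + blk_len <= z)%Z) ->
  (z < tn (S n))%Z -> Body z = Gn n z.
Proof.
  intros n z H1 H2. pose proof blk_len_pos. pose proof P_pos.
  unfold Body. destruct (nidx_spec z) as [S1 S2]. set (k := nidx z) in *.
  destruct (lt_eq_lt_dec k n) as [[Hl|Hl]|Hl].
  - destruct H1 as [H1|H1]; [lia|]. pose proof (tn_sep k n Hl). pose proof (tn_le k (n - 1) ltac:(lia)).
    rewrite !Gn_outside; [reflexivity | left | right]; lia.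
  - subst k. rewrite Hl. reflexivity.
  - destruct (Nat.eq_dec k (S n)) as [Hk|Hk]; [|specialize (S2 (S n) ltac:(lia)); lia].
    specialize (S2 n ltac:(lia)). rewrite Hk, !Gn_outside; [reflexivity | right | left]; lia.
Qed.

Lemma Body_xf : forall z, (forall r, act r = true -> (z < tn r \/ tn r + blk_len <= z)%Z) -> Body z = xf z.
Proof.
  intros z Hz. unfold Body, Gn. destruct (act (nidx z)) eqn:Ha; [|reflexivity].
  apply D_outside. apply Hz. exact Ha.
Qed.

End Body.

Section Construction.
Variables (Pre : nat -> Z -> A) (cq : nat -> Z).
Hypothesis Pre_adm : forall qq i, admissible (Pre qq) (pos i).
Hypothesis Pre_xf : forall qq z, (cq qq <= z)%Z -> Pre qq z = xf z.
Hypothesis cq_nonneg : forall qq, (0 <= cq qq)%Z.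
Hypothesis Pre0 : Pre 0%nat = xf.
Hypothesis Pre_dense : forall (k : nat) u, X u -> exists qq, (Z.of_nat k <= cq qq)%Z /\
  forall i, win k i -> Pre qq (pos i) = u i.

(* The code (qq, al) uses block n iff n is of class qq and lies beyond the
   prefix; for qq = 0 (the prefix of x) blocks are used only after the first
   bit 1 of al, so that the zero sequence codes x itself. *)
Definition act (qq : nat) (al : nat -> bool) (n : nat) : bool :=
  (Nat.eqb (cls n) qq && Z.leb (cq qq + Z.of_nat M) (tn n) &&
   (if Nat.eqb qq 0 then existsb al (seq 0 (S (gi n))) else true))%bool.
Definition bit (al : nat -> bool) (n : nat) : bool := al (gi n).

Definition Zc (qq : nat) (al : nat -> bool) : Z -> A := glue (Pre qq) (Body (act qq al) (bit al)) (cq qq).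
Definition val (jj qq : nat) (al : nat -> bool) (z : Z) : A := Zc qq al (z + Z.of_nat jj * P)%Z.
Definition Psi (jj qq : nat) (al : nat -> bool) : pt I A := point_of (val jj qq al).

Definition trivial_code (qq : nat) (al : nat -> bool) : Prop := qq = 0%nat /\ forall i, al i = false.

Lemma act_blk : forall qq al i m, (Z.to_nat (cq qq + Z.of_nat M) <= m)%nat ->
  act qq al (blk qq i m) = (if Nat.eqb qq 0 then existsb al (seq 0 (S i)) else true).
Proof.
  intros qq al i m Hm. unfold act. rewrite cls_blk, gi_blk, Nat.eqb_refl.
  replace (Z.leb (cq qq + Z.of_nat M) (tn (blk qq i m))) with true; [reflexivity|].
  symmetry. apply Z.leb_le. pose proof (tn_ge (blk qq i m)). pose proof (blk_ge qq i m).
  pose proof (cq_nonneg qq). lia.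
Qed.

Lemma act_cls : forall qq al n, cls n <> qq -> act qq al n = false.
Proof. intros qq al n Hn. unfold act. apply Nat.eqb_neq in Hn. rewrite Hn. reflexivity. Qed.

Lemma act_trivial : forall n, act 0 (fun _ => false) n = false.
Proof.
  intros n. assert (HE : forall l, existsb (fun _ : nat => false) l = false) by (induction l; auto).
  unfold act. rewrite HE. cbn [Nat.eqb]. apply Bool.andb_false_r.
Qed.

Lemma Body_before : forall qq al z, (z < cq qq + Z.of_nat M)%Z -> Body (act qq al) (bit al) z = xf z.
Proof.
  intros qq al z Hz. apply Body_xf. intros r Hr. left. unfold act in Hr.
  apply andb_prop in Hr. destruct Hr as [Hr _]. apply andb_prop in Hr. destruct Hr as [_ Hr].
  apply Z.leb_le in Hr. lia.
Qed.

Lemma Zc_adm : forall qq al i, admissible (Zc qq al) (pos i).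
Proof.
  intros. unfold Zc. apply admissible_glue; auto using Body_adm.
  intros z Hz. rewrite Pre_xf, Body_before by lia. reflexivity.
Qed.

Lemma Psi_X : forall jj qq al, X (Psi jj qq al).
Proof.
  intros jj qq al. apply point_of_in_X. intros i.
  apply (admissible_translate (Zc qq al) _ _ (Z.of_nat jj * P)); [reflexivity|].
  replace (pos i + Z.of_nat jj * P)%Z with (pos (Nat.iter (jj * p) sh i)) by (rewrite pos_iter; unfold P; lia).
  apply Zc_adm.
Qed.

Lemma Psi_at : forall jj qq al z, (0 <= z)%Z -> Psi jj qq al (ofZ z) = val jj qq al z.
Proof. intros. unfold Psi, point_of. rewrite pos_ofZ; auto. Qed.

Lemma Psi_trivial : forall jj al, (forall i, al i = false) -> Psi jj 0 al = x.
Proof.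
  intros jj al Hal. replace al with (fun _ : nat => false) by (apply functional_extensionality; auto).
  assert (HZ : Zc 0 (fun _ => false) = xf).
  { apply functional_extensionality. intros z. unfold Zc, glue. destruct (z <? cq 0)%Z.
    - rewrite Pre0. reflexivity.
    - apply Body_xf. intros r Hr. rewrite act_trivial in Hr. discriminate. }
  rewrite <- point_of_xf. unfold Psi, point_of, val. rewrite HZ.
  apply functional_extensionality. intros i. apply xf_per.
Qed.

Lemma Psi_shift : forall jj qq al, shiftn sh p (Psi jj qq al) = Psi (S jj) qq al.
Proof.
  intros. apply functional_extensionality. intros i.
  rewrite shiftn_iter. unfold Psi, point_of, val. rewrite pos_iter. f_equal. unfold P. lia.
Qed.

Lemma existsb_ext_in : forall (f g : nat -> bool) l, (forall i, In i l -> f i = g i) -> existsb f l = existsb g l.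
Proof. intros f g l. induction l; simpl; intros Hfg; auto. rewrite Hfg, IHl; auto. Qed.

(* Psi jj qq is continuous in the bit sequence: position z only depends on
   the bits with index below nidx z. *)
Lemma Psi_cont : forall jj qq k, exists m, forall al al', prefix_eq m al al' ->
  agree win k (Psi jj qq al) (Psi jj qq al').
Proof.
  intros jj qq k. exists (Z.to_nat (Z.of_nat k + Z.of_nat jj * P) + 1)%nat. intros al al' Hal i Hi.
  apply win_pos in Hi. unfold Psi, point_of, val.
  set (z := (pos i + Z.of_nat jj * P)%Z).
  unfold Zc, glue. destruct (z <? cq qq)%Z; auto.
  unfold Body, Gn. set (n := nidx z). pose proof (nidx_le z) as Hnz. fold n in Hnz.
  assert (Hn : (n < Z.to_nat (Z.of_nat k + Z.of_nat jj * P) + 1)%nat) by (unfold z in *; lia).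
  pose proof (gi_le n).
  assert (Hact : act qq al n = act qq al' n).
  { unfold act. destruct (Nat.eqb qq 0); auto. f_equal. apply existsb_ext_in.
    intros i0 Hi0. apply in_seq in Hi0. apply Hal. lia. }
  assert (Hbit : bit al n = bit al' n) by (unfold bit; apply Hal; lia).
  rewrite Hact, Hbit. reflexivity.
Qed.

Lemma val_xf : forall jj qq al w, (cq qq <= w + Z.of_nat jj * P)%Z ->
  (forall r, (w + Z.of_nat jj * P < tn r \/ tn r + blk_len <= w + Z.of_nat jj * P)%Z) ->
  val jj qq al w = xf w.
Proof.
  intros jj qq al w Hc Hr. unfold val, Zc. rewrite glue_r by auto.
  rewrite Body_xf by auto. apply xf_per.
Qed.

Lemma val_eval : forall jj qq al n z, (1 <= n)%nat -> (cq qq <= z + Z.of_nat jj * P)%Z ->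
  (tn (n - 1) + blk_len <= z + Z.of_nat jj * P)%Z -> (z + Z.of_nat jj * P < tn (S n))%Z ->
  val jj qq al z = Gn (act qq al) (bit al) n (z + Z.of_nat jj * P)%Z.
Proof. intros. unfold val, Zc. rewrite glue_r by auto. apply Body_local; auto. Qed.

Lemma Gn_before_q : forall ac bt n z, (z < tn n + q)%Z -> Gn ac bt n z = xf z.
Proof. intros. unfold Gn. destruct (ac n); auto. apply D_before_q. auto. Qed.

Lemma Gn_between : forall ac bt n z, bt n = true -> (tn n + mk_len <= z < tn n + off2 + P + q)%Z ->
  Gn ac bt n z = xf z.
Proof.
  intros ac bt n z Hb Hz. unfold Gn. destruct (ac n); auto. rewrite Hb.
  apply D_between. fold (tn n). unfold bit_shift. lia.
Qed.

Lemma late_block : forall n J, (0 <= J)%Z -> (blk_len + J + 2 <= Z.of_nat n)%Z ->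
  (tn (n - 1) + blk_len <= tn n - J)%Z /\ (tn n + blk_len + J < tn (S n))%Z.
Proof.
  intros n J HJ Hn. pose proof blk_len_pos. pose proof P_pos. split.
  - pose proof (tn_S (n - 1)) as T. replace (S (n - 1)) with n in T by lia.
    pose proof (G_mul (2 * Z.of_nat (n - 1) + 1) ltac:(lia)). lia.
  - pose proof (tn_S n). pose proof (G_mul (2 * Z.of_nat n + 1) ltac:(lia)). lia.
Qed.

Definition leads (jj qq : nat) (al : nat -> bool) (jj' qq' : nat) (al' : nat -> bool) (n : nat) : Prop :=
  act qq al n = true /\
  (act qq' al' n = false \/ (jj' < jj)%nat \/ (jj' = jj /\ bit al n = false /\ bit al' n = true)).

Lemma witness : forall jj qq al jj' qq' al' n,
  (blk_len + Z.of_nat (Nat.max jj jj') * P + cq qq + cq qq' + 2 <= Z.of_nat n)%Z ->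
  leads jj qq al jj' qq' al' n ->
  exists z, (Z.of_nat n - Z.of_nat (Nat.max jj jj') * P <= z)%Z /\ val jj qq al z <> val jj' qq' al' z.
Proof.
  intros jj qq al jj' qq' al' n Hn (Ha & Hcase).
  set (J := (Z.of_nat (Nat.max jj jj') * P)%Z) in *.
  pose proof P_pos. pose proof blk_len_pos. pose proof (tn_ge n).
  pose proof (cq_nonneg qq). pose proof (cq_nonneg qq').
  assert (HJ : (Z.of_nat jj * P <= J /\ Z.of_nat jj' * P <= J)%Z)
    by (unfold J; split; apply Z.mul_le_mono_nonneg_r; lia).
  destruct (late_block n J) as [R1 R2]; [lia | lia|].
  destruct Hcase as [Hb|[Hj|(Hj & Hb1 & Hb2)]].
  - exists (tn n - Z.of_nat jj * P + q)%Z. split; [lia|].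
    rewrite (val_eval jj qq al n), (val_eval jj' qq' al' n) by lia.
    unfold Gn. rewrite Ha, Hb.
    replace (tn n - Z.of_nat jj * P + q + Z.of_nat jj * P)%Z with (tn n + q)%Z by lia.
    replace (tn n - Z.of_nat jj * P + q + Z.of_nat jj' * P)%Z
      with ((tn n + q) + (Z.of_nat jj' - Z.of_nat jj) * P)%Z by lia.
    rewrite xf_per. unfold tn. apply D_at_q.
  - exists (tn n - Z.of_nat jj * P + q)%Z. split; [lia|].
    assert (Z.of_nat jj' * P + P <= Z.of_nat jj * P)%Z by nia.
    rewrite (val_eval jj qq al n), (val_eval jj' qq' al' n) by lia.
    unfold Gn at 1. rewrite Ha.
    replace (tn n - Z.of_nat jj * P + q + Z.of_nat jj * P)%Z with (tn n + q)%Z by lia.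
    rewrite Gn_before_q by lia.
    replace (tn n - Z.of_nat jj * P + q + Z.of_nat jj' * P)%Z
      with ((tn n + q) + (Z.of_nat jj' - Z.of_nat jj) * P)%Z by lia.
    rewrite xf_per. unfold tn. apply D_at_q.
  - subst jj'. exists (tn n - Z.of_nat jj * P + off2 + q)%Z. split; [lia|].
    rewrite (val_eval jj qq al n), (val_eval jj qq' al' n) by lia.
    replace (tn n - Z.of_nat jj * P + off2 + q + Z.of_nat jj * P)%Z
      with (tn n + off2 + bit_shift false + q)%Z by (unfold bit_shift; lia).
    rewrite (Gn_between (act qq' al') (bit al') n) by (auto; unfold bit_shift; lia).
    unfold Gn. rewrite Ha, Hb1. unfold tn. apply D_at_second_q.
Qed.

Definition stdiff (jj qq : nat) (al : nat -> bool) (jj' qq' : nat) (al' : nat -> bool) (n : nat) : Prop :=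
  act qq al n <> act qq' al' n \/
  (act qq al n = true /\ act qq' al' n = true /\ (jj <> jj' \/ bit al n <> bit al' n)).

Lemma stdiff_sym : forall jj qq al jj' qq' al' n,
  stdiff jj qq al jj' qq' al' n -> stdiff jj' qq' al' jj qq al n.
Proof. unfold stdiff. intros. destruct H as [H|(H1 & H2 & [H3|H3])]; auto. Qed.

Lemma stdiff_leads : forall jj qq al jj' qq' al' n, stdiff jj qq al jj' qq' al' n ->
  leads jj qq al jj' qq' al' n \/ leads jj' qq' al' jj qq al n.
Proof.
  unfold stdiff, leads. intros jj qq al jj' qq' al' n [Hact|(Ha & Hb & [Hj|Hbit])].
  - destruct (act qq al n), (act qq' al' n); [congruence | auto | auto | congruence].
  - destruct (lt_eq_lt_dec jj' jj) as [[Hl|Hl]|Hl]; [auto | lia | auto].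
  - destruct (Nat.eq_dec jj jj') as [<-|Hj].
    + destruct (bit al n), (bit al' n); try congruence;
        [right | left]; split; try assumption; right; right; auto.
    + destruct (lt_eq_lt_dec jj' jj) as [[Hl|Hl]|Hl]; [auto | lia | auto].
Qed.

Lemma active_block : forall qq al, ~ trivial_code qq al ->
  forall m, (Z.to_nat (cq qq + Z.of_nat M) <= m)%nat -> exists i, act qq al (blk qq i m) = true.
Proof.
  intros qq al Hnt m Hm. destruct (Nat.eq_dec qq 0) as [->|Hq0].
  - assert (exists i, al i = true) as [i Hi].
    { apply NNPP. intro Hn. apply Hnt. split; auto. intros i.
      destruct (al i) eqn:E; auto. exfalso. eauto. }
    exists i. rewrite act_blk by exact Hm. apply existsb_upto. eauto.
  - exists 0%nat. rewrite act_blk by exact Hm. apply Nat.eqb_neq in Hq0. rewrite Hq0. reflexivity.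
Qed.

Lemma stdiff_nontrivial : forall jj qq al jj' qq' al', ~ trivial_code qq al ->
  ~ (jj = jj' /\ qq = qq' /\ forall i, al i = al' i) ->
  forall N0, exists n, (N0 <= n)%nat /\ stdiff jj qq al jj' qq' al' n.
Proof.
  intros jj qq al jj' qq' al' Hnt Hd N0.
  set (m := (N0 + Z.to_nat (cq qq + Z.of_nat M) + Z.to_nat (cq qq' + Z.of_nat M))%nat).
  assert (Hm : forall i, (N0 <= blk qq i m)%nat) by (intros; pose proof (blk_ge qq i m); unfold m in *; lia).
  destruct (active_block qq al Hnt m) as [i0 Hi0]; [unfold m; lia|].
  destruct (Nat.eq_dec qq qq') as [<-|Hqq].
  2:{ exists (blk qq i0 m). split; [apply Hm|]. left.
      rewrite Hi0, act_cls by (rewrite cls_blk; exact Hqq). discriminate. }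
  destruct (Nat.eq_dec jj jj') as [<-|Hjj].
  2:{ exists (blk qq i0 m). split; [apply Hm|]. unfold stdiff. rewrite Hi0.
      destruct (act qq al' (blk qq i0 m)); [right; auto | left; discriminate]. }
  assert (exists i, al i <> al' i) as [i Hi].
  { apply NNPP. intro Hn. apply Hd. split; auto. split; auto. intros i.
    apply NNPP. intro. apply Hn. eauto. }
  assert (Hfalse : forall be, existsb be (seq 0 (S i)) = false -> be i = false).
  { intros be Hbe. destruct (be i) eqn:E; auto. rewrite <- Hbe. symmetry. apply existsb_upto. eauto. }
  exists (blk qq i m). split; [apply Hm|]. unfold stdiff, bit.
  rewrite !act_blk, gi_blk by (unfold m; lia).
  destruct (Nat.eqb qq 0); [|right; auto].
  destruct (existsb al (seq 0 (S i))) eqn:E1, (existsb al' (seq 0 (S i))) eqn:E2;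
    [right; auto | left; discriminate | left; discriminate |].
  exfalso. apply Hi. rewrite (Hfalse al E1), (Hfalse al' E2). reflexivity.
Qed.

Lemma stdiff_inf : forall jj qq al jj' qq' al',
  ~ (jj = jj' /\ qq = qq' /\ forall i, al i = al' i) ->
  ~ (trivial_code qq al /\ trivial_code qq' al') ->
  forall N0, exists n, (N0 <= n)%nat /\ stdiff jj qq al jj' qq' al' n.
Proof.
  intros jj qq al jj' qq' al' Hd Hz N0. destruct (classic (trivial_code qq al)) as [Ht|Hnt].
  - destruct (stdiff_nontrivial jj' qq' al' jj qq al) with (N0 := N0) as (n & Hn & Hs).
    + intro Ht'. apply Hz. auto.
    + intros (H1 & H2 & H3). apply Hd. auto.
    + exists n. split; [exact Hn | apply stdiff_sym; exact Hs].
  - apply stdiff_nontrivial; auto.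
Qed.

Lemma differ : forall jj qq al jj' qq' al',
  ~ (jj = jj' /\ qq = qq' /\ forall i, al i = al' i) ->
  ~ (trivial_code qq al /\ trivial_code qq' al') ->
  forall Z0, exists z, (Z0 <= z)%Z /\ val jj qq al z <> val jj' qq' al' z.
Proof.
  intros jj qq al jj' qq' al' Hd Hz Z0.
  set (J := (Z.of_nat (Nat.max jj jj') * P)%Z).
  pose proof P_pos. pose proof blk_len_pos. pose proof (cq_nonneg qq). pose proof (cq_nonneg qq').
  assert (0 <= J)%Z by (unfold J; nia).
  assert (HJ' : Z.of_nat (Nat.max jj' jj) = Z.of_nat (Nat.max jj jj')) by (rewrite Nat.max_comm; reflexivity).
  destruct (stdiff_inf jj qq al jj' qq' al' Hd Hz
    (Z.to_nat (blk_len + J + cq qq + cq qq' + Z.abs Z0 + 2))) as (n & Hn & Hst).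
  destruct (stdiff_leads _ _ _ _ _ _ _ Hst) as [Hl|Hl].
  - destruct (witness jj qq al jj' qq' al' n) as (z & Hz1 & Hz2); [fold J; lia | exact Hl|].
    exists z. split; [fold J in Hz1; lia | exact Hz2].
  - destruct (witness jj' qq' al' jj qq al n) as (z & Hz1 & Hz2); [rewrite HJ'; fold J; lia | exact Hl|].
    exists z. rewrite HJ' in Hz1. fold J in Hz1. split; [lia | auto].
Qed.

Lemma Psi_differ : forall jj qq al jj' qq' al', Psi jj qq al <> Psi jj' qq' al' ->
  forall Z0, exists z, (Z0 <= z)%Z /\ val jj qq al z <> val jj' qq' al' z.
Proof.
  intros jj qq al jj' qq' al' Hne. apply differ.
  - intros (<- & <- & H3). apply Hne.
    replace al' with al by (apply functional_extensionality; auto). reflexivity.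
  - intros ((-> & H1) & (-> & H2)). apply Hne. rewrite !Psi_trivial; auto.
Qed.

Lemma Psi_inj : forall jj qq al al', Psi jj qq al = Psi jj qq al' -> forall i, al i = al' i.
Proof.
  intros jj qq al al' He i. apply NNPP. intro Hi.
  destruct (differ jj qq al jj qq al') with (Z0 := 0%Z) as (z & Hz & Hd).
  - intros (_ & _ & H3). auto.
  - intros ((_ & H3) & (_ & H4)). apply Hi. rewrite H3, H4. reflexivity.
  - apply Hd. rewrite <- !Psi_at by exact Hz. rewrite He. reflexivity.
Qed.

(* Positions at distance at least R from every block start form a syndetic
   set (uniformly above any bound C), since block starts are eventually
   further than 2R apart. *)
Lemma sparse_blocks : forall R C : Z, (0 <= R)%Z -> exists D : nat, forall m : nat, exists n : Z,
  (Z.of_nat m <= n <= Z.of_nat m + Z.of_nat D)%Z /\ (C <= n)%Z /\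
  forall r, (n < tn r - R \/ tn r + R <= n)%Z.
Proof.
  intros R C HR. set (r0 := Z.to_nat R). pose proof (tn_ge r0).
  exists (Z.to_nat (Z.abs C + tn r0 + 3 * R)). intros m.
  set (m1 := Z.max (Z.of_nat m) (Z.max C (tn r0 + R))).
  destruct (classic (exists r, (tn r - R <= m1 < tn r + R)%Z)) as [(r & Hr)|Hno].
  - assert (Hr0 : (r0 < r)%nat).
    { destruct (Nat.lt_ge_cases r0 r) as [Hc|Hc]; auto. pose proof (tn_le r r0 Hc). lia. }
    exists (tn r + R)%Z. split; [lia|]. split; [lia|]. intros r'.
    destruct (lt_eq_lt_dec r' r) as [[Hl|Hl]|Hl].
    + pose proof (tn_le r' r ltac:(lia)). lia.
    + subst. lia.
    + pose proof (tn_lt r r' Hl). pose proof (G_mul (2 * Z.of_nat r + 1) ltac:(lia)). left. lia.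
  - exists m1. split; [lia|]. split; [lia|]. intros r.
    destruct (Z.lt_ge_cases m1 (tn r - R)); [left; auto|]. right.
    destruct (Z.lt_ge_cases m1 (tn r + R)); [exfalso; eauto | auto].
Qed.

Lemma Psi_synd_proximal : forall jj qq al jj' qq' al',
  synd_proximal sh win (Psi jj qq al) (Psi jj' qq' al').
Proof.
  intros jj qq al jj' qq' al' k T HT.
  pose proof P_pos. pose proof blk_len_pos. pose proof (cq_nonneg qq). pose proof (cq_nonneg qq').
  set (K := Z.of_nat k). set (J := (Z.of_nat (Nat.max jj jj') * P)%Z).
  assert (HJ : (Z.of_nat jj * P <= J /\ Z.of_nat jj' * P <= J)%Z)
    by (unfold J; split; apply Z.mul_le_mono_nonneg_r; lia).
  destruct (sparse_blocks (blk_len + J + K) (cq qq + cq qq' + K)) as [D HD]; [unfold K; lia|].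
  destruct (HT (S D)) as [m0 Hm0]. destruct (HD m0) as (n & Hn & HnC & Hfar).
  exists (Z.to_nat n). split.
  - intros i Hi. apply win_pos in Hi. rewrite !shiftn_ofZ. unfold Psi, point_of.
    rewrite pos_ofZ, Z2Nat.id by lia.
    rewrite !val_xf; try reflexivity; try lia; intros r; specialize (Hfar r); unfold K in *; lia.
  - replace (Z.to_nat n) with (m0 + (Z.to_nat n - m0))%nat by lia. apply Hm0. lia.
Qed.

Lemma Psi_not_asymptotic : forall jj qq al jj' qq' al', Psi jj qq al <> Psi jj' qq' al' ->
  ~ asymptotic sh win (Psi jj qq al) (Psi jj' qq' al').
Proof.
  intros jj qq al jj' qq' al' Hne Has. destruct (Has 1%nat) as [N0 HN0].
  destruct (Psi_differ _ _ _ _ _ _ Hne (Z.of_nat N0)) as (z & Hz & Hd).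
  apply Hd. rewrite <- !(Psi_at _ _ _ z) by lia.
  assert (Hw : win 1 (ofZ 0%Z)) by (apply win_pos; rewrite pos_ofZ; lia).
  specialize (HN0 (Z.to_nat z) ltac:(lia) (ofZ 0%Z) Hw).
  rewrite !shiftn_ofZ, pos_ofZ, Z2Nat.id in HN0 by lia. exact HN0.
Qed.

Lemma coded_set_works : exists S : pset I A,
  (forall y, S y -> X y) /\ dense_in win X S /\ mycielski win S /\
  S x /\ (forall y, S y -> S (shiftn sh p y)) /\ synd_scrambled sh win S.
Proof.
  exists (fun y => exists jj qq al, y = Psi jj qq al).
  split; [|split; [|split; [|split; [|split]]]].
  - intros y (jj & qq & al & ->). apply Psi_X.
  - intros U HU (u & Xu & Uu). destruct (HU u Uu) as [k Hk].
    destruct (Pre_dense k u Xu) as (qq & Hc & Hpre).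
    exists (Psi 0 qq (fun _ => false)). split; [eauto|]. apply Hk. intros i Hi.
    apply win_pos in Hi. unfold Psi, point_of, val, Zc. rewrite Z.add_0_r, glue_l by lia.
    symmetry. apply Hpre. apply win_pos. lia.
  - exists (fun N y => exists al, y = Psi (fst (Cantor.of_nat N)) (snd (Cantor.of_nat N)) al). split.
    + intros N. apply image_cantor; [apply Psi_cont | apply Psi_inj].
    + intros y. split.
      * intros (jj & qq & al & ->). exists (Cantor.to_nat (jj, qq)). rewrite Cantor.cancel_of_to. eauto.
      * intros (N & al & ->). eauto.
  - exists 0%nat, 0%nat, (fun _ => false). symmetry. apply Psi_trivial. reflexivity.
  - intros y (jj & qq & al & ->). rewrite Psi_shift. eauto.
  - split.
    + exists (Psi 0 0 (fun _ => false)), (Psi 0 0 (fun _ => true)). split; [eauto|]. split; [eauto|].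
      intro He. discriminate (Psi_inj _ _ _ _ He 0).
    + intros a b (jj & qq & al & ->) (jj' & qq' & al' & ->) Hab.
      split; [apply Psi_synd_proximal | apply Psi_not_asymptotic; exact Hab].
Qed.

End Construction.
End Blocks.

Section Prefixes.
(* The patterns on the window k are coded by numbers c, read in base
   b = length lA, where lA lists all symbols. *)
Variables (lA : list A) (d0 : A).
Hypothesis HlA : forall a, In a lA.

Definition pattern (k c : nat) (i : I) : A :=
  nth ((c / length lA ^ Z.to_nat (pos i + Z.of_nat k)) mod length lA) lA d0.

Lemma pattern_complete : forall k (u : pt I A), exists c, forall i, win k i -> pattern k c i = u i.
Proof.
  intros k u.
  assert (Hb : (0 < length lA)%nat) by (destruct lA; [destruct (HlA d0) | simpl; lia]).
  destruct (choice (fun e n => (n < length lA)%nat /\ nth n lA d0 = u (ofZ (Z.of_nat e - Z.of_nat k))))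
    as [g Hg]; [intros e; apply In_nth, HlA|].
  destruct (digits_exist (length lA) g Hb (fun e => proj1 (Hg e)) (2 * k)) as (c & _ & Hc).
  exists c. intros i Hi. apply win_pos in Hi. unfold pattern. rewrite Hc by lia.
  rewrite (proj2 (Hg _)). f_equal. rewrite <- (ofZ_pos i) at 2. f_equal. lia.
Qed.

Definition prefix_for (k c : nat) (Pr : Z -> A) (cc : Z) : Prop :=
  (forall i, admissible Pr (pos i)) /\ (forall z, (cc <= z)%Z -> Pr z = xf z) /\ (Z.of_nat k <= cc)%Z /\
  ((exists v, X v /\ forall i, win k i -> v i = pattern k c i) ->
   forall i, win k i -> Pr (pos i) = pattern k c i).

Lemma prefix_for_exists : forall k c, exists PC : (Z -> A) * Z, prefix_for k c (fst PC) (snd PC).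
Proof.
  intros k c. destruct (classic (exists v, X v /\ forall i, win k i -> v i = pattern k c i))
    as [(v & Xv & Hv)|Hno].
  - destruct (prefix_exists v k Xv) as (Pr & cc & H1 & H2 & H3 & H4).
    exists (Pr, cc). repeat split; auto. intros _ i Hi. rewrite H4 by exact Hi. apply Hv, Hi.
  - destruct (prefix_exists x k Xx) as (Pr & cc & H1 & H2 & H3 & _).
    exists (Pr, cc). repeat split; auto. intros Hex. contradiction.
Qed.

Lemma prefix_family : exists (Pre : nat -> Z -> A) (cq : nat -> Z),
  (forall qq i, admissible (Pre qq) (pos i)) /\ (forall qq z, (cq qq <= z)%Z -> Pre qq z = xf z) /\
  (forall qq, (0 <= cq qq)%Z) /\ Pre 0%nat = xf /\
  (forall (k : nat) u, X u -> exists qq, (Z.of_nat k <= cq qq)%Z /\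
     forall i, win k i -> Pre qq (pos i) = u i).
Proof.
  destruct (choice (fun code (PC : (Z -> A) * Z) =>
    prefix_for (fst (Cantor.of_nat code)) (snd (Cantor.of_nat code)) (fst PC) (snd PC)))
    as [f Hf]; [intros code; apply prefix_for_exists|].
  exists (fun qq => match qq with O => xf | S code => fst (f code) end).
  exists (fun qq => match qq with O => 0%Z | S code => snd (f code) end).
  split; [|split; [|split; [|split]]].
  - intros [|code] i; [apply admissible_xf | apply (Hf code)].
  - intros [|code] z Hz; [reflexivity | apply (Hf code); exact Hz].
  - intros [|code]; [lia|]. destruct (Hf code) as (_ & _ & H3 & _). lia.
  - reflexivity.
  - intros k u Xu. destruct (pattern_complete k u) as [c Hc].
    exists (S (Cantor.to_nat (k, c))).
    destruct (Hf (Cantor.to_nat (k, c))) as (_ & _ & H3 & H4).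
    rewrite Cantor.cancel_of_to in H3, H4. cbn [fst snd] in H3, H4.
    assert (Hreal : exists v, X v /\ forall i, win k i -> v i = pattern k c i)
      by (exists u; split; [exact Xu | intros j Hj; symmetry; apply Hc, Hj]).
    split; [exact H3|]. intros i Hi. rewrite (H4 Hreal i Hi). apply Hc, Hi.
Qed.
End Prefixes.

Variable lA : list A.
Hypothesis HlA : forall a, In a lA.

Lemma scrambled_set_exists : exists S : pset I A,
  (forall y, S y -> X y) /\ dense_in win X S /\ mycielski win S /\
  S x /\ (forall y, S y -> S (shiftn sh p y)) /\ synd_scrambled sh win S.
Proof.
  destruct marker_exists as (B & L & q & B_adm & B_hi & q_range & B_q & B_lo).
  destruct (prefix_family lA (x (ofZ 0%Z)) HlA) as (Pre & cq & Pre_adm & Pre_xf & cq_nonneg & Pre0 & Pre_dense).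
  exact (coded_set_works B L q B_adm B_hi q_range B_q B_lo Pre cq Pre_adm Pre_xf cq_nonneg Pre0 Pre_dense).
Qed.
End Periodic.
End SFT.
End Positions.

Lemma thm4p7_positions : forall (I : Type) (sh : I -> I) (win : nat -> I -> Prop) (pos : I -> Z) (ofZ : Z -> I),
  (forall i, pos (sh i) = (pos i + 1)%Z) -> (forall i, ofZ (pos i) = i) ->
  (forall z, (0 <= z)%Z -> pos (ofZ z) = z) ->
  (forall k i, win k i <-> (- Z.of_nat k < pos i < Z.of_nat k)%Z) ->
  thm4p7_for sh win.
Proof.
  intros I sh win pos ofZ Hsh Hpos Hofz Hwin A [lA HlA] X _ [F HF] Hinf Hmix x p Xx Hp Hper.
  eapply scrambled_set_exists; eauto.
Qed.

Theorem theorem4p7 :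
  thm4p7_for S win1 /\ thm4p7_for Z.succ win2.
Proof.
  split.
  - apply (thm4p7_positions nat S win1 Z.of_nat Z.to_nat); intros; unfold win1 in *; lia.
  - apply (thm4p7_positions Z Z.succ win2 (fun z => z) (fun z => z)); intros; unfold win2 in *; lia.
Qed.
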